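(* Let $S$ be a finite set with $n\ge1$ elements and $p:2^{S}\to\mathbb{Z}\cup\{-\infty\}$ a set-function with $p(\emptyset)=0$ and $p(S)$ finite. Call an integer $\mu$ good if $\mu|X|\ge p(X)$ for every $X\subseteq S$, and bad otherwise; let $\mu_{\min}$ be the smallest good integer (equivalently, $\max\{\lceil p(X)/|X|\rceil:\emptyset\ne X\subseteq S\}$). Consider the following procedure. Let $\mu_0=\lceil p(S)/|S|\rceil-1$ (which is bad) and let $X_0$ be any set maximizing $p(X)-\mu_0|X|$ over $X\subseteq S$. For $j=1,2,\dots$, given $X_{j-1}$, let $\mu_j=\lceil p(X_{j-1})/|X_{j-1}|\rceil$; if $\mu_j$ is good, stop and output $\mu_j$; otherwise let $X_j$ be any set maximizing $p(X)-\mu_j|X|$ over $X\subseteq S$ (so $X_j\neq\emptyset$) and continue. Then the procedure stops, and if $h$ is the first index for which $\mu_h$ is good, then $\mu_h=\mu_{\min}$ and $h\le n$. *)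

From HB Require Import structures.
From mathcomp Require Import all_boot all_order all_algebra.
Set Implicit Arguments. Unset Strict Implicit. Unset Printing Implicit Defensive.
Import Order.TTheory GRing.Theory Num.Theory.
Local Open Scope ring_scope.

(* Values in Z ∪ {-oo}: [None] stands for -oo, [Some a] for the integer a. *)
Definition zinf := option int.

Definition zinf_le (u v : zinf) : bool :=
  match u, v with
  | None, _ => true
  | Some _, None => false
  | Some a, Some b => a <= b
  end.

Definition ceil_div (a : int) (b : nat) : int :=
  Num.ceil ((a%:~R : rat) / (b%:R : rat)).

Definition good (T : finType) (p : {set T} -> zinf) (mu : int) : Prop :=
  forall X : {set T}, zinf_le (p X) (Some (mu * (#|X|%:Z))).

Definition objective (T : finType) (p : {set T} -> zinf) (mu : int) (X : {set T}) : zinf :=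
  omap (fun a => a - mu * (#|X|%:Z)) (p X).

Definition is_maximizer (T : finType) (p : {set T} -> zinf) (mu : int) (X : {set T}) : Prop :=
  forall Y : {set T}, zinf_le (objective p mu Y) (objective p mu X).

From HB Require Import structures.
From mathcomp Require Import all_boot all_order all_algebra.
From mathcomp Require Import zify.

Set Implicit Arguments.
Unset Strict Implicit.
Unset Printing Implicit Defensive.
Import Order.TTheory GRing.Theory Num.Theory.
Local Open Scope ring_scope.

(* Each bad mu_j is beaten by its maximizer X_j, and the next guess
   mu_(j+1) = ceil(p(X_j)/|X_j|) satisfies mu_(j+1) |X_j| >= p(X_j) > mu_j |X_j|,
   so the guesses strictly increase.  Viewing p(Y) - mu |Y| as a line in mu of
   slope -|Y|, the line of X_(j+1) lies below that of X_j at mu_j but above it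
   at mu_(j+1); hence |X_(j+1)| < |X_j|.  The sizes |X_0| <= n, |X_1|, ... are
   positive and strictly decreasing, so some mu_h with h <= n is good.  Every
   good m satisfies m |X_(h-1)| >= p(X_(h-1)), i.e. m >= mu_h. *)

Lemma ceil_div_le (a m : int) (k : nat) : (0 < k)%N ->
  (ceil_div a k <= m) = (a <= m * k%:Z).
Proof.
move=> k_gt0; rewrite /ceil_div ceil_le_int ler_pdivrMr ?ltr0n //.
by rewrite -[k%:R]/((k%:Z)%:~R) -intrM ler_int.
Qed.

Lemma crossing_card_lt (mu mu' a a' k k' : int) : mu < mu' ->
  a' - mu * k' <= a - mu * k -> a - mu' * k < a' - mu' * k' -> k' < k.
Proof. by move=> *; nia. Qed.

Section GoodValues.

Variables (T : finType) (p : {set T} -> zinf).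

Definition goodb (mu : int) : bool :=
  [forall Y : {set T}, zinf_le (p Y) (Some (mu * #|Y|%:Z))].

Lemma goodP mu : reflect (good p mu) (goodb mu).
Proof. exact: forallP. Qed.

Lemma good_ceil_div_le m X a : good p m -> p X = Some a -> (0 < #|X|)%N ->
  ceil_div a #|X| <= m.
Proof. by move=> /(_ X) + pX X_gt0; rewrite pX ceil_div_le. Qed.

Lemma ceil_div_pred_bad X a : p X = Some a -> (0 < #|X|)%N ->
  ~ good p (ceil_div a #|X| - 1).
Proof. by move=> pX X_gt0 /good_ceil_div_le /(_ pX X_gt0); lia. Qed.

Hypothesis p0 : p set0 = Some 0.

Lemma bad_maximizer_exceeds mu X : ~ good p mu -> is_maximizer p mu X ->
  exists a, [/\ p X = Some a, mu * #|X|%:Z < a & (0 < #|X|)%N].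
Proof.
move=> /goodP; rewrite negb_forall => /existsP [Y pY_gt] /(_ Y).
rewrite /objective; case: (p Y) pY_gt => [b|] //= /negbTE b_gt.
case pX: (p X) => [a|] //= le_ba.
have a_gt : mu * #|X|%:Z < a by rewrite -subr_gt0 (lt_le_trans _ le_ba) // subr_gt0 ltNge b_gt.
exists a; split=> //; rewrite card_gt0; apply: contraTneq a_gt => X0.
by move: pX; rewrite X0 p0 => -[<-]; rewrite cards0 mulr0 ltxx.
Qed.

Lemma maximizer_card_decr mu X mu' X' :
  ~ good p mu -> is_maximizer p mu X ->
  ~ good p mu' -> is_maximizer p mu' X' ->
  mu' = ceil_div (odflt 0 (p X)) #|X| -> (#|X'| < #|X|)%N.
Proof.
move=> bad_mu max_X bad_mu' max_X' mu'E.
have [a [pX a_gt X_gt0]] := bad_maximizer_exceeds bad_mu max_X.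
have [a' [pX' a'_gt _]] := bad_maximizer_exceeds bad_mu' max_X'.
rewrite pX /= in mu'E.
have le_mu' : a <= mu' * #|X|%:Z by rewrite -ceil_div_le // mu'E.
have lt_mu : mu < mu' by rewrite ltNge mu'E ceil_div_le // -ltNge.
have le_obj : a' - mu * #|X'|%:Z <= a - mu * #|X|%:Z.
  by have := max_X X'; rewrite /objective pX pX'.
rewrite -ltz_nat; apply: (crossing_card_lt lt_mu le_obj).
by apply: (@le_lt_trans _ _ 0); rewrite ?subr_le0 ?subr_gt0.
Qed.

Definition bad_before (mu : nat -> int) (h : nat) : Prop :=
  forall i : nat, (i < h)%N -> ~ good p (mu i).

Section Procedure.

Variables (pS : int) (mu : nat -> int) (X : nat -> {set T}).
Hypotheses (T_gt0 : (0 < #|T|)%N) (pT : p [set: T] = Some pS).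
Hypotheses (mu0E : mu 0%N = ceil_div pS #|T| - 1)
  (max_X0 : is_maximizer p (mu 0%N) (X 0%N)).
Hypothesis muSE : forall j : nat, bad_before mu j.+1 ->
  mu j.+1 = ceil_div (odflt 0 (p (X j))) #|X j|.
Hypothesis max_XS : forall j : nat, bad_before mu j.+2 ->
  is_maximizer p (mu j.+1) (X j.+1).

Lemma mu0_bad : ~ good p (mu 0%N).
Proof. by rewrite mu0E -cardsT; apply: ceil_div_pred_bad; rewrite ?cardsT. Qed.

Lemma maximizer_X j : bad_before mu j.+1 -> is_maximizer p (mu j) (X j).
Proof. by case: j => [_|j /max_XS]. Qed.

Lemma card_X_le j : bad_before mu j.+1 -> (j + #|X j| <= #|X 0%N|)%N.
Proof.
elim: j => [//|j IH] bad_j.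
have bad_j' : bad_before mu j.+1 by move=> i /ltnW; apply: bad_j.
have := maximizer_card_decr (bad_j' j (ltnSn j)) (maximizer_X bad_j')
  (bad_j j.+1 (ltnSn _)) (maximizer_X bad_j) (muSE bad_j').
by move=> lt_card; rewrite addSnnS (leq_trans _ (IH bad_j')) // leq_add2l.
Qed.

Lemma bad_before_le_card h : bad_before mu h -> (h <= #|T|)%N.
Proof.
case: h => [//|j] bad_j.
have [_ [_ _ X_gt0]] := bad_maximizer_exceeds (bad_j j (ltnSn j)) (maximizer_X bad_j).
rewrite (leq_trans _ (max_card (X 0%N))) // (leq_trans _ (card_X_le bad_j)) //.
by rewrite -addn1 leq_add2l.
Qed.

Lemma exists_good : exists i, good p (mu i).
Proof.
have [/existsP [i /goodP good_i]|/existsP no_good] :=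
  boolP [exists i : 'I_#|T|.+1, goodb (mu i)]; first by exists i.
suff /bad_before_le_card : bad_before mu #|T|.+1 by rewrite ltnn.
by move=> i lt_iT /goodP good_i; apply: no_good; exists (Ordinal lt_iT).
Qed.

Lemma first_good_min h m : good p (mu h) -> bad_before mu h ->
  good p m -> mu h <= m.
Proof.
case: h => [/mu0_bad //|j] _ bad_j good_m.
have [a [pX _ X_gt0]] := bad_maximizer_exceeds (bad_j j (ltnSn j)) (maximizer_X bad_j).
by rewrite muSE // pX; apply: good_ceil_div_le.
Qed.

End Procedure.

End GoodValues.

Theorem theorem2p11 (T : finType) (p : {set T} -> zinf) (pS : int)
  (mu : nat -> int) (X : nat -> {set T})
  (hn : (0 < #|T|)%N)
  (hp0 : p set0 = Some 0)
  (hpS : p [set: T] = Some pS)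
  (hmu0 : mu 0%N = ceil_div pS #|T| - 1)
  (hX0 : is_maximizer p (mu 0%N) (X 0%N))
  (hmuS : forall j : nat, (forall i : nat, (i <= j)%N -> ~ good p (mu i)) ->
            mu j.+1 = ceil_div (odflt 0 (p (X j))) #|X j|)
  (hXS : forall j : nat, (forall i : nat, (i <= j.+1)%N -> ~ good p (mu i)) ->
            is_maximizer p (mu j.+1) (X j.+1)) :
  exists h : nat,
    [/\ good p (mu h),
        forall j : nat, (j < h)%N -> ~ good p (mu j),
        (h <= #|T|)%N
      & forall m : int, good p m -> mu h <= m].
Proof.
have [i /goodP good_i] := exists_good hp0 hX0 hmuS hXS.
have [h /goodP good_h min_h] := ex_minnP (ex_intro (fun k => goodb p (mu k)) i good_i).
have bad_h : bad_before p mu h.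
  by move=> j lt_jh /goodP /min_h; rewrite leqNgt lt_jh.
exists h; split=> //.
  exact (bad_before_le_card hp0 hX0 hmuS hXS bad_h).
by move=> m; apply: first_good_min hn hpS hmu0 hX0 hmuS hXS _ _ good_h bad_h.
Qed.
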